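(* Let $(X_1,\|\cdot\|_1),\dots,(X_n,\|\cdot\|_n)$ be $F$-spaces (with $\|x\|_i=d_i(x,0)$ the $F$-norm of $X_i$) and let $\Phi$ be a Young function satisfying the Mulholland condition. On the vector space direct sum $\bigoplus_{i=1}^n X_i$ define $$d_\Phi\big((x_1,\dots,x_n),(y_1,\dots,y_n)\big)=\Phi^{-1}\Big(\sum_{i=1}^n\Phi(\|x_i-y_i\|_i)\Big).$$ Then $\big(\bigoplus_{i=1}^n X_i,d_\Phi\big)$ is an $F$-space.
   Context: A Young function is a convex, left semicontinuous, even function $\Phi:\mathbb R\to[0,\infty]$ with $\Phi(0)=0$ and $\lim_{x\to\infty}\Phi(x)=\infty$. A Young function $\Phi$ satisfies the Mulholland condition if it is continuous and strictly increasing on $[0,\infty)$ and $\log\Phi(x)$ is a convex function of $\log x$; equivalently $\Phi(x)=|x|e^{\chi(\log|x|)}$ for a continuous increasing convex function $\chi$ (called the characteristic function of $\Phi$). $\Phi^{-1}$ denotes the inverse of $\Phi$ restricted to $[0,\infty)$. An $F$-space is a vector space $X$ over $\mathbb R$ or $\mathbb C$ with a translation-invariant metric $d$ such that scalar multiplication and addition are continuous and $(X,d)$ is complete; its $F$-norm is $\|x\|=d(x,0)$. *)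

From HB Require Import structures.
From mathcomp Require Import all_boot all_order all_algebra.
From mathcomp Require Import all_classical all_reals.
From mathcomp Require Import all_analysis.
Set Implicit Arguments. Unset Strict Implicit. Unset Printing Implicit Defensive.
Import Order.TTheory GRing.Theory Num.Theory.
Import numFieldNormedType.Exports.
Local Open Scope classical_set_scope.
Local Open Scope ring_scope.

Record vdata (K : numFieldType) := VData {
  vcarrier :> Type;
  vadd : vcarrier -> vcarrier -> vcarrier;
  vopp : vcarrier -> vcarrier;
  vzero : vcarrier;
  vscale : K -> vcarrier -> vcarrier }.

Definition is_vspace (K : numFieldType) (V : vdata K) : Prop :=
  (forall x y z : V, vadd x (vadd y z) = vadd (vadd x y) z) /\
  (forall x y : V, vadd x y = vadd y x) /\
  (forall x : V, vadd (vzero V) x = x) /\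
  (forall x : V, vadd (vopp x) x = vzero V) /\
  (forall x : V, vscale 1 x = x) /\
  (forall (a b : K) (x : V), vscale a (vscale b x) = vscale (a * b) x) /\
  (forall (a : K) (x y : V), vscale a (vadd x y) = vadd (vscale a x) (vscale a y)) /\
  (forall (a b : K) (x : V), vscale (a + b) x = vadd (vscale a x) (vscale b x)).

Definition lmod_vdata (K : numFieldType) (X : lmodType K) : vdata K :=
  @VData K X (fun x y : X => x + y) (fun x : X => - x) (0 : X)
    (fun (a : K) (x : X) => a *: x).

Definition is_Fspace (R : realType) (K : numFieldType) (V : vdata K)
    (d : V -> V -> R) : Prop :=
  is_vspace V /\
      [/\ (forall x y : V, d x y = 0 <-> x = y),
          (forall x y : V, d x y = d y x)
        & (forall x y z : V, d x z <= d x y + d y z)] /\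
      (forall x y z : V, d (vadd x z) (vadd y z) = d x y) /\
      (forall (x0 y0 : V) (e : R), 0 < e -> exists2 del : R, 0 < del &
         forall x y : V, d x x0 < del -> d y y0 < del ->
           d (vadd x y) (vadd x0 y0) < e) /\
      (forall (a0 : K) (x0 : V) (e : R), 0 < e ->
         exists (delK : K) (del : R), [/\ 0 < delK, 0 < del &
         forall (a : K) (x : V), `|a - a0| < delK -> d x x0 < del ->
           d (vscale a x) (vscale a0 x0) < e]) /\
      (forall u : nat -> V,
         (forall e : R, 0 < e -> exists N : nat, forall m n : nat,
             (N <= m)%N -> (N <= n)%N -> d (u m) (u n) < e) ->
         exists l : V, forall e : R, 0 < e -> exists N : nat,
             forall n : nat, (N <= n)%N -> d (u n) l < e).

Definition Young (R : realType) (Phi : R -> \bar R) : Prop :=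
  (forall x, (0 <= Phi x)%E) /\
      (forall (x y lam : R), 0 <= lam <= 1 ->
         (Phi (lam * x + (1 - lam) * y)%R <= lam%:E * Phi x + (1 - lam)%:E * Phi y)%E) /\
      (forall (x : R) (a : \bar R), (a < Phi x)%E ->
         exists2 del : R, 0 < del & forall y, x - del < y <= x -> (a < Phi y)%E) /\
      (forall x, Phi (- x) = Phi x) /\
      Phi 0 = 0%E /\
      (forall M : R, exists N : R, forall x, N < x -> (M%:E < Phi x)%E).

(* Mulholland condition: continuous, strictly increasing on [0,oo), and
   log Phi(x) a convex function of log x, i.e. t |-> ln (Phi (exp t)) convex. *)
Definition Mulholland (R : realType) (Phi : R -> \bar R) : Prop :=
  [/\ {within [set x : R | 0 <= x], continuous Phi},
      (forall x y : R, 0 <= x -> x < y -> (Phi x < Phi y)%E)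
    & (forall (s t lam : R), 0 <= lam <= 1 ->
         ln (fine (Phi (expR (lam * s + (1 - lam) * t)))) <=
         lam * ln (fine (Phi (expR s))) + (1 - lam) * ln (fine (Phi (expR t))))].

Definition Phi_inv (R : realType) (Phi : R -> \bar R) (y : \bar R) : R :=
  xget 0 [set x : R | 0 <= x /\ Phi x = y].

Definition dsum_vdata (K : numFieldType) (n : nat) (X : 'I_n -> vdata K) : vdata K :=
  @VData K (forall i : 'I_n, X i)
    (fun x y i => vadd (x i) (y i))
    (fun x i => vopp (x i))
    (fun i => vzero (X i))
    (fun a x i => vscale a (x i)).

Definition d_Phi (R : realType) (K : numFieldType) (n : nat) (X : 'I_n -> vdata K)
    (d : forall i : 'I_n, X i -> X i -> R) (Phi : R -> \bar R)
    (x y : dsum_vdata X) : R :=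
  Phi_inv Phi (\sum_(i < n) Phi (d i (vadd (x i) (vopp (y i))) (vzero (X i))))%E.

From mathcomp Require Import all_boot all_order all_algebra.
From mathcomp Require Import all_classical all_reals all_analysis.
From mathcomp Require Import ring lra.
Set Implicit Arguments. Unset Strict Implicit. Unset Printing Implicit Defensive.
Import Order.TTheory GRing.Theory Num.Theory.
Import numFieldNormedType.Exports.
Local Open Scope classical_set_scope.
Local Open Scope ring_scope.

(* Only the triangle inequality needs the Mulholland condition. Write
   phi := Phi on [0, oo), let a_i, b_i be the component distances of (x, y)
   and (y, z), and A := d_Phi(x, y), B := d_Phi(y, z), so that
   phi A = sum_i phi a_i and phi B = sum_i phi b_i. Convexity of phi with the
   weights A / (A + B) and B / (A + B), together with the log-convexity of
   t |-> phi (e^t), which makes phi (C s) / phi C <= phi (c s) / phi c for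
   c <= C and s <= 1, gives
     phi (a_i + b_i) <= phi (A + B) (A phi a_i / phi A + B phi b_i / phi B) / (A + B),
   and summing over i yields sum_i phi (a_i + b_i) <= phi (A + B), i.e.
   d_Phi(x, z) <= A + B.
   Everything else is componentwise: d_Phi dominates each component distance,
   and it is below e as soon as all of them are below e / (n + 1), because
   phi (e / (n + 1)) <= phi e / (n + 1). Hence continuity of the operations and
   completeness pass from the X_i to the direct sum. *)

Lemma ler_term_psum (R : numDomainType) n (f : 'I_n -> R) (i : 'I_n) :
  (forall j, 0 <= f j) -> f i <= \sum_(j < n) f j.
Proof. by move=> f_ge0; rewrite (bigD1 i) //= lerDl sumr_ge0. Qed.

Lemma common_pos_lbound (F : numFieldType) n (f : 'I_n -> F) :
  (forall i, 0 < f i) -> exists2 m, 0 < m & forall i, m <= f i.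
Proof.
move=> f_gt0; set s := \sum_(j < n) (f j)^-1.
have s_ge0 : 0 <= s by apply: sumr_ge0 => j _; rewrite invr_ge0 ltW.
have s1_gt0 : 0 < 1 + s by rewrite ltr_pwDl.
exists (1 + s)^-1 => [|i]; first by rewrite invr_gt0.
rewrite -lef_pV2 ?posrE ?invr_gt0 // invrK (@le_trans _ _ s) ?ler_wpDl //.
by apply: (ler_term_psum (f := fun j => (f j)^-1)) => j; rewrite invr_ge0 ltW.
Qed.

Lemma convex_inner_pair_le (R : realFieldType) (f : R -> R) :
  (forall s t lam, 0 <= lam <= 1 ->
     f (lam * s + (1 - lam) * t) <= lam * f s + (1 - lam) * f t) ->
  forall p q q' r, p <= q -> q <= r -> q + q' = p + r ->
  f q + f q' <= f p + f r.
Proof.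
move=> f_convex p q q' r pq qr qq'E.
have [pr|pr] := eqVneq p r.
  have qp : q = p by apply/le_anti; rewrite pq pr qr.
  by move: qq'E; rewrite qp pr => /addrI ->.
have rp_gt0 : 0 < r - p by rewrite subr_gt0 lt_neqAle pr (le_trans pq qr).
set mu := (r - q) / (r - p).
have mu01 : 0 <= mu <= 1.
  by rewrite /mu divr_ge0 ?(ltW rp_gt0) ?subr_ge0 //= ler_pdivrMr // mul1r lerD2l lerN2.
have mu'01 : 0 <= 1 - mu <= 1.
  by case/andP: mu01 => ? ?; rewrite subr_ge0 lerBlDr lerDl; apply/andP.
have qE : q = mu * p + (1 - mu) * r by rewrite /mu; field; exact: lt0r_neq0.
have q'E : q' = (1 - mu) * p + (1 - (1 - mu)) * r.
  have -> : q' = p + r - q by rewrite -qq'E addrAC subrr add0r.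
  by rewrite qE; ring.
have -> : f p + f r =
    (mu * f p + (1 - mu) * f r) + ((1 - mu) * f p + (1 - (1 - mu)) * f r) by ring.
by rewrite qE q'E lerD // f_convex.
Qed.

Section YoungMulholland.
Variables (R : realType) (Phi : R -> \bar R).
Hypotheses (HY : Young Phi) (HM : Mulholland Phi).

Local Notation phi x := (fine (Phi x)).

Lemma phi_ge0 x : 0 <= phi x.
Proof. by case: HY => Phi_ge0 _; exact: fine_ge0. Qed.

Lemma phi0 : phi 0 = 0.
Proof. by case: HY => _ [_ [_ [_ [-> _]]]]. Qed.

Lemma Phi_fine x : Phi x = (phi x)%:E.
Proof.
case: HY => Phi_ge0 [_ [_ [Phi_even _]]]; case: HM => _ Phi_lt _.
wlog x_ge0 : x / 0 <= x => [wlog_x|].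
  by have [/wlog_x //|/ltW] := lerP 0 x; rewrite -oppr_ge0 -Phi_even => /wlog_x.
have x_lt : x < x + 1 by rewrite ltrDl.
have := Phi_lt x (x + 1) x_ge0 x_lt; have := Phi_ge0 x.
by case: (Phi x) => // _; rewrite ltNge leey.
Qed.

Lemma phi_homo_lt x y : 0 <= x -> x < y -> phi x < phi y.
Proof. by case: HM => _ Phi_lt _ x_ge0 /(Phi_lt _ _ x_ge0); rewrite -lte_fin -!Phi_fine. Qed.

Lemma phi_gt0 x : 0 < x -> 0 < phi x.
Proof. by move=> x_gt0; rewrite -phi0; exact: phi_homo_lt (lexx 0) x_gt0. Qed.

Lemma phi_mono_le : {in Num.nneg &, {mono (fun x => phi x) : x y / x <= y}}.
Proof. by apply: le_mono_in => x y; rewrite nnegrE => x_ge0 _; exact: phi_homo_lt. Qed.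

Lemma phi_mono_lt : {in Num.nneg &, {mono (fun x => phi x) : x y / x < y}}.
Proof. exact: leW_mono_in phi_mono_le. Qed.

Lemma phi_convex x y lam : 0 <= lam <= 1 ->
  phi (lam * x + (1 - lam) * y) <= lam * phi x + (1 - lam) * phi y.
Proof.
case: HY => _ [Phi_convex _] /(Phi_convex x y).
by rewrite -lee_fin (EFinD (_ * _)) !EFinM -!Phi_fine.
Qed.

Lemma phi_continuous b : {within `[0, b], continuous (fun x => phi x)}.
Proof.
case: HM => Phi_cont _ _.
apply: (@continuous_subspaceW _ _ _ [set x : R | 0 <= x]).
  by move=> x /=; rewrite in_itv /= => /andP[].
move=> x; have := Phi_cont x; rewrite /continuous_at /from_subspace /= => Phi_cvg.
have Phi_cvg' : Phi y @[y --> x] --> (phi x)%:E by rewrite -Phi_fine.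
by apply: (fine_cvg Phi_cvg'); exact: subspace_filter.
Qed.

Lemma Phi_invP y : 0 <= y -> 0 <= Phi_inv Phi y%:E /\ phi (Phi_inv Phi y%:E) = y.
Proof.
case: HY => _ [_ [_ [_ [_ Phi_unbounded]]]] y_ge0.
have [N NP] := Phi_unbounded y; set b := Num.max N 0 + 1.
have b_ge0 : 0 <= b by rewrite addr_ge0 // le_max lexx orbT.
have y_lt : y < phi b.
  by rewrite -lte_fin -Phi_fine NP // ltr_pwDr // le_max lexx.
have [|c c0b phicE] := IVT b_ge0 (phi_continuous (b := b)) (v := y).
  by rewrite phi0 ge_min le_max y_ge0 (ltW y_lt) orbT.
have /andP[c_ge0 _] : 0 <= c <= b by move: c0b; rewrite in_itv.
have [] := @xgetPex _ 0 [set x : R | 0 <= x /\ Phi x = y%:E].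
  by exists c; split; rewrite // Phi_fine phicE.
by rewrite /Phi_inv => x_ge0 ->.
Qed.

Lemma phi_mulr_ratio c C s : 0 < c -> c <= C -> 0 <= s <= 1 ->
  phi (C * s) * phi c <= phi (c * s) * phi C.
Proof.
move=> c_gt0 cC /andP[s_ge0 s_le1]; have C_gt0 := lt_le_trans c_gt0 cC.
have [->|s_neq0] := eqVneq s 0; first by rewrite !mulr0 phi0 !mul0r.
have s_gt0 : 0 < s by rewrite lt_neqAle eq_sym s_neq0.
pose chi t := ln (phi (expR t)).
have chi_convex : forall s t lam, 0 <= lam <= 1 ->
    chi (lam * s + (1 - lam) * t) <= lam * chi s + (1 - lam) * chi t.
  by case: HM.
have : chi (ln C + ln s) + chi (ln c) <= chi (ln c + ln s) + chi (ln C).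
  apply: (convex_inner_pair_le chi_convex).
  - by rewrite lerD2r ler_ln ?posrE.
  - by rewrite gerDl ln_le0.
  - by ring.
rewrite /chi !expRD !lnK ?posrE // -!lnM ?posrE ?phi_gt0 ?mulr_gt0 //.
by rewrite ler_ln ?posrE ?mulr_gt0 ?phi_gt0 ?mulr_gt0.
Qed.

Lemma phiD_le A B a b : 0 < A -> 0 < B -> 0 <= a <= A -> 0 <= b <= B ->
  phi (a + b) <= phi (A + B) * ((A * (phi a / phi A) + B * (phi b / phi B)) / (A + B)).
Proof.
move=> A_gt0 B_gt0 aP bP.
have AB_gt0 : 0 < A + B by rewrite addr_gt0.
have A_le : A <= A + B by rewrite lerDl ltW.
have B_le : B <= A + B by rewrite lerDr ltW.
set lam := A / (A + B).
have lam01 : 0 <= lam <= 1.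
  by rewrite /lam divr_ge0 ?(ltW A_gt0) ?(ltW AB_gt0) //= ler_pdivrMr // mul1r.
have [lam_ge0 lam_le1] := andP lam01.
have rescale c x : 0 < c -> c <= A + B -> 0 <= x <= c ->
    phi ((A + B) * (x / c)) <= phi (A + B) * (phi x / phi c).
  move=> c_gt0 cAB /andP[x_ge0 xc].
  have xc01 : 0 <= x / c <= 1 by rewrite divr_ge0 ?(ltW c_gt0) //= ler_pdivrMr ?mul1r.
  have := phi_mulr_ratio c_gt0 cAB xc01; rewrite [c * _]mulrC divfK ?gt_eqF // => ratio.
  by rewrite mulrA ler_pdivlMr ?phi_gt0 // [_ * phi x]mulrC.
have -> : a + b = lam * ((A + B) * (a / A)) + (1 - lam) * ((A + B) * (b / B)).
  by rewrite /lam; field; rewrite !gt_eqF.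
rewrite (_ : phi (A + B) * _ = lam * (phi (A + B) * (phi a / phi A))
    + (1 - lam) * (phi (A + B) * (phi b / phi B))); last first.
  by rewrite /lam; field; rewrite !gt_eqF ?phi_gt0.
apply: le_trans (phi_convex _ _ lam01) _.
rewrite lerD // ler_wpM2l ?subr_ge0 //.
- exact: rescale A_gt0 A_le aP.
- exact: rescale B_gt0 B_le bP.
Qed.

Lemma Mulholland_inequality n (a b : 'I_n -> R) A B :
  (forall i, 0 <= a i) -> (forall i, 0 <= b i) -> 0 <= A -> 0 <= B ->
  phi A = \sum_(i < n) phi (a i) -> phi B = \sum_(i < n) phi (b i) ->
  \sum_(i < n) phi (a i + b i) <= phi (A + B).
Proof.
move=> a_ge0 b_ge0 A_ge0 B_ge0 phiA phiB.
have le_of_sum c C i : (forall j, 0 <= c j) -> 0 <= C ->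
    phi C = \sum_(j < n) phi (c j) -> c i <= C.
  move=> c_ge0 C_ge0 phiC; rewrite -phi_mono_le ?nnegrE // phiC.
  by apply: (ler_term_psum (f := fun j => phi (c j))) => j; exact: phi_ge0.
have aA i : a i <= A := le_of_sum a A i a_ge0 A_ge0 phiA.
have bB i : b i <= B := le_of_sum b B i b_ge0 B_ge0 phiB.
have aP i : 0 <= a i <= A by rewrite a_ge0 aA.
have bP i : 0 <= b i <= B by rewrite b_ge0 bB.
have [A0|A_neq0] := eqVneq A 0.
  have a0 i : a i = 0 by apply/le_anti; rewrite a_ge0 -A0 aA.
  by rewrite A0 add0r phiB; under eq_bigr do rewrite a0 add0r.
have [B0|B_neq0] := eqVneq B 0.
  have b0 i : b i = 0 by apply/le_anti; rewrite b_ge0 -B0 bB.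
  by rewrite B0 addr0 phiA; under eq_bigr do rewrite b0 addr0.
have A_gt0 : 0 < A by rewrite lt_neqAle eq_sym A_neq0.
have B_gt0 : 0 < B by rewrite lt_neqAle eq_sym B_neq0.
apply: le_trans (ler_sum _ (fun i _ => phiD_le A_gt0 B_gt0 (aP i) (bP i))) _.
rewrite -mulr_sumr -mulr_suml big_split /= -!mulr_sumr -!mulr_suml -phiA -phiB.
by rewrite !divff ?gt_eqF ?phi_gt0 ?addr_gt0 // !mulr1 divff ?gt_eqF ?addr_gt0 // mulr1.
Qed.

End YoungMulholland.

Lemma is_vspace_lmod (K : numFieldType) (X : lmodType K) : is_vspace (lmod_vdata X).
Proof.
by do !split=> * /=; rewrite ?addrA ?add0r ?addNr ?scale1r ?scalerA ?scalerDr ?scalerDl // addrC.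
Qed.

Lemma is_vspace_dsum (K : numFieldType) n (X : 'I_n -> vdata K) :
  (forall i, is_vspace (X i)) -> is_vspace (dsum_vdata X).
Proof.
move=> X_vspace; do !split=> *; apply: functional_extensionality_dep => i /=.
all: have [addA [addC [add0 [addN [scale1 [scaleA [scaleDr scaleDl]]]]]]] := X_vspace i.
all: by rewrite ?addA ?add0 ?addN ?scale1 ?scaleA ?scaleDr ?scaleDl // addC.
Qed.

Section DirectSum.
Variables (R : realType) (K : numFieldType) (n : nat) (X : 'I_n -> lmodType K).
Variables (d : forall i, X i -> X i -> R) (Phi : R -> \bar R).
Arguments d : clear implicits.
Hypotheses (X_Fspace : forall i, @is_Fspace R K (lmod_vdata (X i)) (d i)).
Hypotheses (HY : Young Phi) (HM : Mulholland Phi).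

Local Notation phi x := (fine (Phi x)).
Local Notation V := (dsum_vdata (fun i => lmod_vdata (X i))).

Lemma d_eq0 i (a b : X i) : d i a b = 0 <-> a = b.
Proof. by have [_ [[]]] := X_Fspace i. Qed.

Lemma d_sym i (a b : X i) : d i a b = d i b a.
Proof. by have [_ [[]]] := X_Fspace i. Qed.

Lemma d_triangle i (a b c : X i) : d i a c <= d i a b + d i b c.
Proof. by have [_ [[]]] := X_Fspace i. Qed.

Lemma d_ge0 i (a b : X i) : 0 <= d i a b.
Proof.
have := d_triangle a b a; rewrite (d_sym b a) (proj2 (d_eq0 a a) erefl).
lra.
Qed.

Lemma d_addr i (a b c : X i) : d i (a + c) (b + c) = d i a b.
Proof. by have [_ [_ [d_translate _]]] := X_Fspace i; exact: d_translate. Qed.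

Lemma d_subr0 i (a b : X i) : d i (a - b) 0 = d i a b.
Proof. by rewrite -(d_addr a b (- b)) subrr. Qed.

Definition sum_phi_d (x y : V) : R := \sum_(i < n) phi (d i (x i) (y i)).

Definition dist (x y : V) : R := Phi_inv Phi (sum_phi_d x y)%:E.

Lemma d_PhiE x y :
  @d_Phi R K n (fun i => lmod_vdata (X i)) d Phi x y = dist x y.
Proof.
rewrite /d_Phi /dist /sum_phi_d -sumEFin.
by congr (Phi_inv _ _); apply: eq_bigr => i _; rewrite d_subr0 (Phi_fine HY HM).
Qed.

Lemma sum_phi_d_ge0 x y : 0 <= sum_phi_d x y.
Proof. by apply: sumr_ge0 => i _; exact: phi_ge0. Qed.

Lemma dist_ge0 x y : 0 <= dist x y.
Proof. exact: (proj1 (Phi_invP HY HM (sum_phi_d_ge0 x y))). Qed.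

Lemma phi_dist x y : phi (dist x y) = sum_phi_d x y.
Proof. exact: (proj2 (Phi_invP HY HM (sum_phi_d_ge0 x y))). Qed.

Lemma d_le_dist x y i : d i (x i) (y i) <= dist x y.
Proof.
rewrite -(phi_mono_le HY HM) ?nnegrE ?d_ge0 ?dist_ge0 // phi_dist.
by apply: (ler_term_psum (f := fun j => phi (d j (x j) (y j)))) => j; exact: phi_ge0.
Qed.

Lemma d_lt_dist x y i r : dist x y < r -> d i (x i) (y i) < r.
Proof. exact: le_lt_trans (d_le_dist x y i). Qed.

Lemma dist_lt_of_d e x y : 0 < e ->
  (forall i, d i (x i) (y i) < e / n.+1%:R) -> dist x y < e.
Proof.
move=> e_gt0 d_lt.
have n1_gt0 : 0 < n.+1%:R :> R by rewrite ltr0n.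
have inv_n1 : 0 <= (n.+1%:R : R)^-1 <= 1 by rewrite invr_ge0 ltW //= invf_le1 ?ler1n.
have phi_e_n1 : phi (e / n.+1%:R) <= phi e / n.+1%:R.
  have := phi_convex HY HM e 0 inv_n1.
  by rewrite mulr0 addr0 (phi0 HY) mulr0 addr0 !(mulrC _^-1).
rewrite -(phi_mono_lt HY HM) ?nnegrE ?dist_ge0 ?ltW // phi_dist.
apply: (@le_lt_trans _ _ (\sum_(i < n) phi (e / n.+1%:R))).
  apply: ler_sum => i _; rewrite (phi_mono_le HY HM) ?nnegrE ?d_ge0 ?ltW //.
  exact: le_lt_trans (d_ge0 _ _) (d_lt i).
rewrite sumr_const card_ord (le_lt_trans (ler_wMn2r n phi_e_n1)) //.
rewrite -(mulr_natr (phi e / _) n) mulrAC ltr_pdivrMr // ltr_pM2l ?ltr_nat //.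
exact: (phi_gt0 HY HM).
Qed.

Lemma dist_eq0 x y : dist x y = 0 <-> x = y.
Proof.
split=> [dist0|<-].
  apply: functional_extensionality_dep => i; apply/d_eq0/eqP.
  by rewrite eq_le d_ge0 andbT -dist0 d_le_dist.
apply/eqP; rewrite eq_le dist_ge0 andbT -(phi_mono_le HY HM) ?nnegrE ?dist_ge0 //.
rewrite phi_dist (phi0 HY) /sum_phi_d.
by under eq_bigr do rewrite (proj2 (d_eq0 _ _) erefl) (phi0 HY); rewrite big1_eq.
Qed.

Lemma dist_sym x y : dist x y = dist y x.
Proof. by rewrite /dist /sum_phi_d; under eq_bigr do rewrite d_sym. Qed.

Lemma dist_triangle x y z : dist x z <= dist x y + dist y z.
Proof.
rewrite -(phi_mono_le HY HM) ?nnegrE ?addr_ge0 ?dist_ge0 // phi_dist.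
apply: le_trans (Mulholland_inequality HY HM (fun i => d_ge0 (x i) (y i))
  (fun i => d_ge0 (y i) (z i)) (dist_ge0 x y) (dist_ge0 y z) (phi_dist x y) (phi_dist y z)).
apply: ler_sum => i _; rewrite (phi_mono_le HY HM) ?nnegrE ?addr_ge0 ?d_ge0 //.
exact: d_triangle.
Qed.

Lemma dist_addr x y z : dist (vadd x z) (vadd y z) = dist x y.
Proof. by rewrite /dist /sum_phi_d; under eq_bigr do rewrite d_addr. Qed.

Lemma dist_add_continuous (x0 y0 : V) e : 0 < e -> exists2 del : R, 0 < del &
  forall x y : V, dist x x0 < del -> dist y y0 < del ->
    dist (vadd x y) (vadd x0 y0) < e.
Proof.
move=> e_gt0; have e'_gt0 : 0 < e / n.+1%:R by rewrite divr_gt0 ?ltr0n.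
have /choice[del delP] i : exists del : R, 0 < del /\ forall a b : X i,
    d i a (x0 i) < del -> d i b (y0 i) < del ->
    d i (a + b) (x0 i + y0 i) < e / n.+1%:R.
  have [_ [_ [_ [add_continuous _]]]] := X_Fspace i.
  by have [del ? ?] := add_continuous (x0 i) (y0 i) _ e'_gt0; exists del.
have [m m_gt0 m_le] := common_pos_lbound (fun i => (delP i).1).
exists m => // x y xx0 yy0; apply: dist_lt_of_d => // i.
by apply: (delP i).2; apply: lt_le_trans (m_le i); exact: d_lt_dist.
Qed.

Lemma dist_scale_continuous (a0 : K) (x0 : V) e : 0 < e ->
  exists (delK : K) (del : R), [/\ 0 < delK, 0 < del &
  forall (a : K) (x : V), `|a - a0| < delK -> dist x x0 < del ->
    dist (vscale a x) (vscale a0 x0) < e].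
Proof.
move=> e_gt0; have e'_gt0 : 0 < e / n.+1%:R by rewrite divr_gt0 ?ltr0n.
have /choice[del delP] i : exists del : K * R, [/\ 0 < del.1, 0 < del.2 &
    forall (a : K) (b : X i), `|a - a0| < del.1 -> d i b (x0 i) < del.2 ->
    d i (a *: b) (a0 *: x0 i) < e / n.+1%:R].
  have [_ [_ [_ [_ [scale_continuous _]]]]] := X_Fspace i.
  by have [delK [del [? ? ?]]] := scale_continuous a0 (x0 i) _ e'_gt0; exists (delK, del).
have delK_gt0 i : 0 < (del i).1 by case: (delP i).
have delX_gt0 i : 0 < (del i).2 by case: (delP i).
have [mK mK_gt0 mK_le] := common_pos_lbound delK_gt0.
have [m m_gt0 m_le] := common_pos_lbound delX_gt0.
exists mK, m; split=> // a x aa0 xx0; apply: dist_lt_of_d => // i.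
have [_ _ -> //] := delP i; first exact: lt_le_trans (mK_le i).
by apply: lt_le_trans (m_le i); exact: d_lt_dist.
Qed.

Lemma dist_complete (u : nat -> V) :
  (forall e : R, 0 < e -> exists N : nat, forall p q : nat,
     (N <= p)%N -> (N <= q)%N -> dist (u p) (u q) < e) ->
  exists l : V, forall e : R, 0 < e -> exists N : nat,
     forall p : nat, (N <= p)%N -> dist (u p) l < e.
Proof.
move=> u_cauchy.
have cvg_component i : exists l : X i, forall e : R, 0 < e -> exists N : nat,
    forall p : nat, (N <= p)%N -> d i (u p i) l < e.
  have [_ [_ [_ [_ [_ complete]]]]] := X_Fspace i.
  apply: (complete (fun p => u p i)) => e /u_cauchy[N NP].
  by exists N => p q Np Nq; exact/d_lt_dist/NP.
exists (fun i => proj1_sig (cid (cvg_component i))) => e e_gt0.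
have e'_gt0 : 0 < e / n.+1%:R by rewrite divr_gt0 ?ltr0n.
have /choice[N NP] i := proj2_sig (cid (cvg_component i)) _ e'_gt0.
exists (\max_(i < n) N i)%N => p Np; apply: dist_lt_of_d => // i.
by apply: NP; apply: leq_trans Np; exact: leq_bigmax.
Qed.

End DirectSum.

Theorem mainTheorem1 (R : realType) (K : numFieldType) (n : nat)
    (X : 'I_n -> lmodType K) (d : forall i : 'I_n, X i -> X i -> R)
    (Phi : R -> \bar R) :
  (forall i : 'I_n, @is_Fspace R K (lmod_vdata (X i)) (d i)) ->
  Young Phi -> Mulholland Phi ->
  @is_Fspace R K (dsum_vdata (fun i => lmod_vdata (X i))) (@d_Phi R K n (fun i => lmod_vdata (X i)) d Phi).
Proof.
move=> X_Fspace HY HM.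
have -> : @d_Phi R K n (fun i => lmod_vdata (X i)) d Phi = dist d Phi.
  by do 2!apply: functional_extensionality_dep => ?; exact: d_PhiE.
split; first exact/is_vspace_dsum/(fun i => is_vspace_lmod (X i)).
split; first split.
- exact: dist_eq0.
- exact: dist_sym.
- exact: dist_triangle.
split; first exact: dist_addr.
split; first exact: dist_add_continuous.
split; first exact: dist_scale_continuous.
exact: dist_complete.
Qed.
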